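(* Let $K\subseteq\mathbb{C}$ be a number field of class number $1$ that is stable under complex conjugation, let $\mathcal{O}_K$ be its ring of integers and $K_0:=K\cap\mathbb{R}$. Let $n$ be odd. If $v\in\mathcal{O}_K^n$ is a column of a matrix $A\in\mathcal{O}_K^{n\times n}$ with $A^*A=\lambda I$ where $\lambda=v^*v$, then there exists $r\in\mathcal{O}_K$ with $\lambda=r\overline{r}$ (and $\lambda\in\mathcal{O}_{K_0}$).
   Context: $A^*=\overline{A}^T$ denotes the conjugate transpose. In particular (taking $K=\mathbb{Q}(i)$), if $n$ is odd and $v\in\mathbb{Z}[i]^n$ is a column of an $n\times n$ Gaussian integer matrix $A$ with $A^*A=\lambda I$, then $\lambda$ is a sum of two squares of rational integers. *)

From HB Require Import structures.
From mathcomp Require Import all_boot all_order all_algebra all_field.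
Set Implicit Arguments. Unset Strict Implicit. Unset Printing Implicit Defensive.
Import Order.TTheory GRing.Theory Num.Theory.
Local Open Scope ring_scope.

(* Subfields of C are modelled as predicates on algC (the algebraic complex
   numbers); every number field K ⊆ C lies inside algC. *)

Definition is_subfieldC (K : {pred algC}) : Prop :=
  [/\ 0 \in K, 1 \in K,
      (forall x y, x \in K -> y \in K -> x - y \in K),
      (forall x y, x \in K -> y \in K -> x * y \in K) &
      (forall x, x \in K -> x^-1 \in K)].

Definition finite_dim_over_Q (K : {pred algC}) : Prop :=
  exists (m : nat) (b : 'I_m -> algC),
    forall x, x \in K -> exists c : 'I_m -> rat, x = \sum_(i < m) ratr (c i) * b i.

Definition number_field (K : {pred algC}) : Prop :=
  is_subfieldC K /\ finite_dim_over_Q K.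

Definition conj_stable (K : {pred algC}) : Prop :=
  forall x, x \in K -> x^* \in K.

Definition ring_of_integers (K : {pred algC}) : {pred algC} :=
  [pred x | (x \in K) && (x \in Aint)].

Definition is_ideal_of (O : {pred algC}) (I : {pred algC}) : Prop :=
  [/\ {subset I <= O}, 0 \in I,
      (forall x y, x \in I -> y \in I -> x + y \in I) &
      (forall a x, a \in O -> x \in I -> a * x \in I)].

Definition class_number_one (K : {pred algC}) : Prop :=
  forall I : {pred algC}, is_ideal_of (ring_of_integers K) I ->
    exists2 g, g \in ring_of_integers K &
      forall x, x \in I <-> exists2 a, a \in ring_of_integers K & x = a * g.

Definition conjT (m n : nat) (A : 'M[algC]_(m, n)) : 'M[algC]_(n, m) :=
  (map_mx Num.conj A)^T.

(* Taking determinants in A^* A = lambda I gives N(det A) = lambda^n, where N(z) = z z^*.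
   For n = 2k + 1 this reads N(det A) = lambda * N(lambda^k), so lambda is a quotient of
   two norms.  Since O_K is a principal ideal domain we may cancel the gcd of det A and
   lambda^k; a Bezout relation between the coprime quotients then writes lambda itself
   as a norm. *)

From HB Require Import structures.
From mathcomp Require Import all_boot all_order all_algebra all_field.
From mathcomp Require Import boolp ring.
Set Implicit Arguments. Unset Strict Implicit. Unset Printing Implicit Defensive.
Import Order.TTheory GRing.Theory Num.Theory.
Local Open Scope ring_scope.

Lemma norm_quotient_coprime (C : numClosedFieldType) (a c l x y : C) :
  a * x + c * y = 1 -> c != 0 -> a * a^* = l * (c * c^*) ->
  let t := l * c * x^* + a * y^* in l = t * t^*.
Proof.
move=> bezout c0 normE t.
have bezoutC : a^* * x^* + c^* * y^* = 1.
  by rewrite -!rmorphM -rmorphD bezout rmorph1.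
have tcE : t * c^* = a.
  transitivity (l * (c * c^*) * x^* + a * c^* * y^*); first by rewrite /t; ring.
  by rewrite -normE -[RHS]mulr1 -bezoutC; ring.
have cc0 : c * c^* != 0 by rewrite mulf_neq0 // conjC_eq0.
apply: (mulIf cc0); rewrite -normE -{1 2}tcE rmorphM /= conjCK; ring.
Qed.

Lemma det_conjT n (A : 'M[algC]_n) : \det (conjT A) = (\det A)^*.
Proof. by rewrite /conjT det_tr det_map_mx. Qed.

Lemma conjT_col_mul_colE n (A : 'M[algC]_n) j :
  (conjT (col j A) *m col j A) 0 0 = \sum_i (A i j)^* * A i j.
Proof. by rewrite mxE; apply: eq_bigr => i _; rewrite !mxE. Qed.

Lemma conjT_col_mul_col_conj n (A : 'M[algC]_n) j :
  ((conjT (col j A) *m col j A) 0 0)^* = (conjT (col j A) *m col j A) 0 0.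
Proof.
rewrite conjT_col_mul_colE rmorph_sum; apply: eq_bigr => i _.
by rewrite rmorphM /= conjCK mulrC.
Qed.

Lemma det_conjT_mul_scalar n (A : 'M[algC]_n) l :
  conjT A *m A = l%:M -> \det A * (\det A)^* = l ^+ n.
Proof. by rewrite -det_conjT mulrC -det_mulmx => ->; rewrite det_scalar. Qed.

Section RingOfIntegers.

Variable K : {pred algC}.
Hypotheses (subK : is_subfieldC K) (conjK : conj_stable K).
Local Notation OK := (ring_of_integers K).

Fact ring_of_integers_subring_closed : subring_closed OK.
Proof.
have [_ K1 KB KM _] := subK.
split=> [|x y|x y]; rewrite !inE ?K1 ?Aint1 // => /andP[Kx Ax] /andP[Ky Ay].
  by rewrite KB ?rpredB.
by rewrite KM ?rpredM.
Qed.

HB.instance Definition _ :=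
  GRing.isSubringClosed.Build algC OK ring_of_integers_subring_closed.

Lemma ring_of_integers_conj x : x \in OK -> x^* \in OK.
Proof. by rewrite !inE => /andP[Kx Ax]; rewrite conjK // (Aint_aut Num.conj). Qed.

Lemma conjT_col_mul_col_ring_of_integers n (A : 'M[algC]_n) j :
  (forall i, A i j \in OK) -> (conjT (col j A) *m col j A) 0 0 \in OK.
Proof.
move=> AO; rewrite conjT_col_mul_colE rpred_sum // => i _.
by rewrite rpredM ?ring_of_integers_conj.
Qed.

Lemma det_ring_of_integers n (A : 'M[algC]_n) :
  (forall i j, A i j \in OK) -> \det A \in OK.
Proof.
move=> AO; apply: rpred_sum => s _.
by rewrite rpredM ?rpred_sign // rpred_prod.
Qed.

Hypothesis pidK : class_number_one K.

Lemma ring_of_integers_Bezout a c : a \in OK -> c \in OK ->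
  exists g a' c' x y, [/\ [&& a' \in OK, c' \in OK, x \in OK & y \in OK],
    a = a' * g, c = c' * g & (g != 0 -> a' * x + c' * y = 1)].
Proof.
move=> aO cO.
pose I : {pred algC} := fun z => `[< exists x y,
  [/\ x \in OK, y \in OK & z = a * x + c * y] >].
have I_ideal : is_ideal_of OK I.
  split=> [z /asboolP[x [y [xO yO ->]]] | | z w | b z].
  - by rewrite rpredD ?rpredM.
  - by apply/asboolP; exists 0, 0; rewrite !rpred0 !mulr0 addr0.
  - move=> /asboolP[x [y [xO yO ->]]] /asboolP[x' [y' [xO' yO' ->]]].
    by apply/asboolP; exists (x + x'), (y + y'); rewrite !rpredD //; split=> //; ring.
  - move=> bO /asboolP[x [y [xO yO ->]]].
    by apply/asboolP; exists (b * x), (b * y); rewrite !rpredM //; split=> //; ring.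
have [g gO gI] := pidK I_ideal.
have [a' a'O aE] : exists2 a', a' \in OK & a = a' * g.
  by apply/gI/asboolP; exists 1, 0; rewrite rpred1 rpred0 mulr1 mulr0 addr0.
have [c' c'O cE] : exists2 c', c' \in OK & c = c' * g.
  by apply/gI/asboolP; exists 0, 1; rewrite rpred1 rpred0 mulr1 mulr0 add0r.
have /asboolP[x [y [xO yO gE]]] : g \in I.
  by apply/gI; exists 1; rewrite ?rpred1 ?mul1r.
exists g, a', c', x, y; split; rewrite ?a'O ?c'O ?xO ?yO // => g0.
by apply: (mulIf g0); rewrite mul1r [in RHS]gE aE cE; ring.
Qed.

Lemma norm_quotient_is_norm a c l : a \in OK -> c \in OK -> l \in OK ->
  c != 0 -> a * a^* = l * (c * c^*) -> exists2 t, t \in OK & l = t * t^*.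
Proof.
move=> aO cO lO c0 normE.
have [g [a' [c' [x [y [/and4P[a'O c'O xO yO] aE cE bezout]]]]]] :=
  ring_of_integers_Bezout aO cO.
have g0 : g != 0 by apply: contraNneq c0; rewrite cE => ->; rewrite mulr0.
have c'0 : c' != 0 by apply: contraNneq c0; rewrite cE => ->; rewrite mul0r.
have gg0 : g * g^* != 0 by rewrite mulf_neq0 // conjC_eq0.
have normE' : a' * a'^* = l * (c' * c'^*).
  apply: (mulIf gg0); transitivity (a * a^*); first by rewrite aE rmorphM; ring.
  by rewrite normE cE rmorphM; ring.
exists (l * c' * x^* + a' * y^*); first by rewrite rpredD ?rpredM ?ring_of_integers_conj.
exact: norm_quotient_coprime (bezout g0) c'0 normE'.
Qed.

Lemma odd_power_norm_is_norm n d l : odd n -> d \in OK -> l \in OK -> l^* = l ->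
  d * d^* = l ^+ n -> exists2 r, r \in OK & l = r * r^*.
Proof.
move=> n_odd dO lO l_real normE.
have [-> | l0] := eqVneq l 0; first by exists 0; rewrite ?rpred0 ?mul0r.
apply: (norm_quotient_is_norm dO (rpredX n./2 lO) lO); first by rewrite expf_neq0.
rewrite normE rmorphXn /= l_real -exprD addnn -exprS.
by rewrite -[in LHS](odd_double_half n) n_odd.
Qed.

End RingOfIntegers.

Theorem mainTheorem2 (K : {pred algC}) (n : nat) (A : 'M[algC]_n) (j : 'I_n) :
  number_field K -> class_number_one K -> conj_stable K ->
  odd n ->
  (forall i k, A i k \in ring_of_integers K) ->
  let lambda := (conjT (col j A) *m col j A) 0 0 in
  conjT A *m A = lambda%:M ->
  (exists2 r, r \in ring_of_integers K & lambda = r * r^*) /\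
  (lambda \in ring_of_integers K /\ lambda \is Num.real).
Proof.
move=> [subK _] pidK conjK n_odd AO lambda AA.
have lambda_real : lambda^* = lambda := conjT_col_mul_col_conj A j.
have lambdaO : lambda \in ring_of_integers K :=
  conjT_col_mul_col_ring_of_integers subK conjK (AO^~ j).
split; last by rewrite CrealE lambda_real.
apply: (odd_power_norm_is_norm subK conjK pidK n_odd
  (det_ring_of_integers subK AO) lambdaO lambda_real).
exact: det_conjT_mul_scalar.
Qed.
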